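(* Let $h\ge 2$ and let $p_1,\dots,p_h$ be primes with $p_i\neq p_{i+1}$ for $i=1,\dots,h-1$. Then there are $\mathrm{CC}[p_1;\dots;p_h]$-circuits of size $2^{O(n^{1/(h-1)})}$ computing the $n$-ary conjunction $\mathrm{AND}_n$.
   Context: For an integer $m\ge 1$ and $A\subseteq\{0,\dots,m-1\}$, a gate $\mathrm{MOD}_m^A$ takes finitely many Boolean inputs (counted with multiplicity, as a wire may be connected several times) and outputs $1$ if their sum modulo $m$ lies in $A$, and $0$ otherwise. A $\mathrm{CC}[m_1;\dots;m_h]$-circuit is a Boolean circuit of depth $h$ in which every gate on level $i$ (level $1$ being fed by the inputs and level $h$ containing the output gate) is of the form $\mathrm{MOD}_{m_i}^A$ for some $A$ (possibly different for each gate), with multiple wires allowed. The size of a circuit is its number of gates. *)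

From mathcomp Require Import all_boot.


Set Implicit Arguments. Unset Strict Implicit. Unset Printing Implicit Defensive.

(* A MOD_m^A gate: [wires] gives, for each input position j of the previous
   level, the number of wires (multiplicity) from j to this gate; [acc] is the
   accepting set A (only its behaviour on residues 0..m-1 matters). *)
Record gate := Gate { wires : seq nat ; acc : pred nat }.

Definition eval_gate (m : nat) (g : gate) (x : seq bool) : bool :=
  acc g ((\sum_(j < size x) nth 0 (wires g) j * nth false x j) %% m).

Definition eval_level (m : nat) (L : seq gate) (x : seq bool) : seq bool :=
  map (fun g => eval_gate m g x) L.

Fixpoint eval_levels (ms : seq nat) (C : seq (seq gate)) (x : seq bool) : seq bool :=
  match ms, C with
  | m :: ms', L :: C' => eval_levels ms' C' (eval_level m L x)
  | _, _ => x
  end.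

Definition is_CC_circuit (ms : seq nat) (C : seq (seq gate)) : Prop :=
  size C = size ms /\ size (last [::] C) = 1%N.

Definition circuit_output (ms : seq nat) (C : seq (seq gate)) (x : seq bool) : bool :=
  head false (eval_levels ms C x).

Definition circuit_size (C : seq (seq gate)) : nat := sumn (map size C).

Definition computes_AND (n : nat) (ms : seq nat) (C : seq (seq gate)) : Prop :=
  forall x : seq bool, size x = n -> circuit_output ms C x = all (fun b : bool => b) x.

From Stdlib Require Import Reals.
From mathcomp Require Import all_boot.
From Stdlib Require Import Lra.
From mathcomp Require cyclic.
From mathcomp Require Import zify.
Set Implicit Arguments. Unset Strict Implicit. Unset Printing Implicit Defensive.

(* The circuit is built from AND-gadgets: when gcd(p, q) = 1, one level of
   p^f + 1 MOD_p gates followed by an integer linear form computes AND_f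
   modulo q.  A MOD_q gate takes its inputs with multiplicities, so the linear
   form can be merged into the wiring of the next level: it suffices that the
   outputs of level i represent, modulo p_(i+1), the ANDs of blocks of the
   input.  Padding the n inputs with ones up to k^(h-1), h - 1 levels of
   gadgets of fan-in k and a last MOD_(p_h) gate testing "= 1" give a circuit
   of size at most h k^h (p^k + 1) = 2^O(k), and k can be taken of order
   n^(1/(h-1)). *)

Lemma all_flatten T (a : pred T) ss : all a (flatten ss) = all (all a) ss.
Proof. by elim: ss => //= s ss IHss; rewrite all_cat IHss. Qed.

Lemma count_sum T (a : pred T) s : count a s = \sum_(x <- s) a x.
Proof. by rewrite -sum1_count big_mkcond. Qed.

Lemma mkseqSl T (F : nat -> T) n : mkseq F n.+1 = F 0 :: mkseq (F \o succn) n.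
Proof. by rewrite /mkseq /= -[1]/(1 + 0) iotaDl -map_comp. Qed.

Fixpoint dot (w : seq nat) (x : seq bool) : nat :=
  if (w, x) is (a :: w', b :: x') then a * b + dot w' x' else 0.

Lemma dot_nil w : dot w [::] = 0. Proof. by case: w. Qed.

Lemma sum_dotE w x : \sum_(j < size x) nth 0 w j * nth false x j = dot w x.
Proof.
elim: x w => [|b x IHx] w; first by rewrite big_ord0 dot_nil.
rewrite big_ord_recl; case: w => [|a w] /=; last by rewrite -IHx.
by rewrite add0n big1 // => j _; rewrite nth_nil.
Qed.

Lemma eval_gateE m g x : eval_gate m g x = acc g (dot (wires g) x %% m).
Proof. by rewrite /eval_gate sum_dotE. Qed.

Lemma dot_mkseq w (F : nat -> bool) f :
  dot w (mkseq F f) = \sum_(t < f) nth 0 w t * F t.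
Proof.
rewrite -sum_dotE size_mkseq; apply: eq_bigr => t _.
by rewrite nth_mkseq.
Qed.

Lemma dot_cat w1 w2 x :
  dot (w1 ++ w2) x = dot w1 (take (size w1) x) + dot w2 (drop (size w1) x).
Proof.
by elim: w1 x => [|a w1 IHw] [|b x] /=; rewrite ?dot_nil ?IHw ?addnA.
Qed.

Lemma dot_catr w x1 x2 :
  dot w (x1 ++ x2) = dot (take (size x1) w) x1 + dot (drop (size x1) w) x2.
Proof.
by elim: x1 w => [|b x1 IHx] [|a w] /=; rewrite ?dot_nil ?IHx ?addnA.
Qed.

Lemma dot_take w x : dot w (take (size w) x) = dot w x.
Proof. by elim: w x => [|a w IHw] [|b x] //=; rewrite IHw. Qed.

Lemma dot_nseq0 n x : dot (nseq n 0) x = 0.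
Proof. by elim: n x => [|n IHn] [|b x] //=; rewrite IHn. Qed.

Lemma dot_scale a w x : dot (map (muln a) w) x = a * dot w x.
Proof.
by elim: w x => [|c w IHw] [|b x] //=; rewrite ?muln0 // IHw mulnDr mulnA.
Qed.

Lemma dot_nseq c x : dot (nseq (size x) c) x = c * count id x.
Proof. by elim: x => [|b x IHx] //=; rewrite ?muln0 // IHx mulnDr. Qed.

Lemma dot_negb w x : size w = size x -> dot w x + dot w (map negb x) = sumn w.
Proof. by elim: w x => [|a w IHw] [|[] x] //= [/IHw <-]; lia. Qed.

Lemma dot_negb_all w x : all id x -> dot w (map negb x) = 0.
Proof. by elim: x w => [|b x IHx] [|a w] //= /andP[-> /IHx ->]; rewrite muln0. Qed.

Definition block T (s b : nat) (x : seq T) := take s (drop (b * s) x).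

Lemma block_drop T s b j (x : seq T) : block s b (drop (j * s) x) = block s (j + b) x.
Proof. by rewrite /block drop_drop mulnDl addnC. Qed.

Lemma block_flatten T U (F : U -> seq T) s r b u0 :
  (forall u, size (F u) = s) -> b < size r ->
  block s b (flatten (map F r)) = F (nth u0 r b).
Proof.
move=> sF; elim: r b => [|u r IHr] [|b] //= ltbr.
  by rewrite /block drop0 -(sF u) take_size_cat.
by rewrite -add1n -block_drop mul1n (drop_size_cat _ (sF u)) IHr.
Qed.

Lemma take_mul_drop T (x : seq T) s f j :
  take (s * f) (drop (j * s) x) = flatten (mkseq (fun t => block s (j + t) x) f).
Proof.
elim: f j => [|f IHf] j; first by rewrite muln0 take0.
rewrite mulnS takeD drop_drop -mulSn IHf mkseqSl /= addn0.
by congr (_ ++ flatten _); apply: eq_mkseq => t /=; rewrite addSnnS.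
Qed.

Lemma block_mul T (x : seq T) s f b :
  block (s * f) b x = flatten (mkseq (fun t => block s (b * f + t) x) f).
Proof. by rewrite -take_mul_drop /block mulnA mulnAC. Qed.

Lemma dot_flatten_blocks G (A : nat -> seq nat) f x :
  (forall t, size (A t) = G) ->
  dot (flatten (mkseq A f)) x = \sum_(t < f) dot (A t) (block G t x).
Proof.
elim: f A x => [|f IHf] A x sA; first by rewrite big_ord0.
rewrite mkseqSl /= dot_cat sA big_ord_recl IHf => [|t]; last exact: sA.
congr (_ + _); first by rewrite /block drop0.
by apply: eq_bigr => t _; rewrite -[G in drop G]mul1n block_drop.
Qed.

Definition and_gadget (p q f : nat) (gs : seq gate) (c : seq nat) :=
  size c = size gs /\
  forall z, size z = f -> dot c (eval_level p gs z) = all id z %[mod q].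

Fixpoint words (p f : nat) : seq (seq nat) :=
  if f is f'.+1 then [seq a :: w | a <- iota 0 p, w <- words p f'] else [:: [::]].

Lemma size_words p f : size (words p f) = p ^ f.
Proof. by elim: f => //= f IHf; rewrite size_allpairs size_iota IHf expnS. Qed.

Lemma size_mem_words p f w : w \in words p f -> size w = f.
Proof.
elim: f w => [|f IHf] w /=; first by rewrite inE => /eqP ->.
by case/allpairsP=> [[a w'] [_ /IHf <- ->]].
Qed.

Lemma count_addn_mod p d r : 0 < p ->
  count (fun a => (a + d) %% p == r %% p) (iota 0 p) = 1.
Proof.
move=> p_gt0; pose v := (r + (p - d %% p)) %% p.
have ltvp : v < p by rewrite ltn_pmod.
have <- : count_mem v (iota 0 p) = 1 by rewrite count_uniq_mem ?iota_uniq ?mem_iota ?ltvp.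
apply: eq_in_count => a; rewrite mem_iota add0n => /andP[_ ltap].
rewrite -(eqn_modDr (p - d %% p)) -/v.
suff -> : (a + d + (p - d %% p)) %% p = a by [].
rewrite {1}(divn_eq d p) addnA -addnA subnKC; last exact/ltnW/ltn_pmod.
by rewrite -addnA -mulSnr addnC modnMDl modn_small.
Qed.

Lemma count_words_dot p u r : 0 < p -> has id u ->
  count (fun w => dot w u %% p == r %% p) (words p (size u)) = p ^ (size u).-1.
Proof.
move=> p_gt0; elim: u => [|b u IHu] //= has_u.
rewrite count_sum big_allpairs_dep /=; case: b has_u => /= [_ | has_u].
  rewrite exchange_big /= -(size_words p (size u)) -(sum1_size (words _ _)).
  apply: eq_bigr => w _; rewrite -[RHS](count_addn_mod (dot w u) r p_gt0) count_sum.
  by apply: eq_bigr => a _; rewrite muln1.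
have u_gt0 : 0 < size u by case: u has_u {IHu}.
rewrite (eq_bigr (fun=> p ^ (size u).-1)) => [|a _]; last first.
  by rewrite -IHu // count_sum; apply: eq_bigr => w _; rewrite muln0.
by rewrite big_const_seq count_predT size_iota iter_addn_0 -expnSr prednK.
Qed.

(* The gate of weight [w] reads w . z and fires iff w . (map negb z) = 1
   (mod p), because w . z + w . (map negb z) = sumn w. *)
Definition and_gates (p f : nat) : seq gate :=
  Gate [::] (fun=> true) ::
  [seq Gate w (fun r => (r + 1) %% p == sumn w %% p) | w <- words p f].

Lemma size_and_gates p f : size (and_gates p f) = (p ^ f).+1.
Proof. by rewrite /= size_map size_words. Qed.

(* By Euler's theorem the p^(f-1) gates that fire when z is not all ones
   contribute q - 1 (mod q), which cancels the constant gate. *)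
Definition and_coefs (p q f : nat) : seq nat :=
  1 :: nseq (p ^ f) ((q - 1) * p ^ ((totient q).-1 * f.-1)).

Lemma count_and_gates_firing p f z : 1 < p -> size z = f ->
  count id (eval_level p (behead (and_gates p f)) z) =
  if all id z then 0 else p ^ f.-1.
Proof.
move=> p_gt1 sz; rewrite /eval_level -map_comp count_map.
rewrite (eq_in_count (a2 := fun w => dot w (map negb z) %% p == 1 %% p)); last first.
  move=> w /size_mem_words sw; rewrite /= sum_dotE -(dot_negb (x := z)) ?sw //.
  by rewrite modnDml eqn_modDl eq_sym.
case: ifP => [allz | /negbT notallz].
  apply/eqP; rewrite -leqn0 leqNgt -has_count; apply/hasP => -[w _] /=.
  by rewrite dot_negb_all // mod0n modn_small.
rewrite -sz -(size_map negb) count_words_dot ?(ltnW p_gt1) //.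
by rewrite has_map; apply/hasP; case/allPn: notallz => b zb nb; exists b.
Qed.

Lemma and_gadget_and_gates p q f : 1 < p -> 0 < q -> coprime p q ->
  and_gadget p q f (and_gates p f) (and_coefs p q f).
Proof.
move=> p_gt1 q_gt0 co_pq; split; first by rewrite size_and_gates /= size_nseq.
move=> z sz; set L := eval_level p (behead (and_gates p f)) z.
have -> : eval_level p (and_gates p f) z = true :: L by [].
have sL : size L = p ^ f by rewrite size_map /= size_map size_words.
rewrite /and_coefs -sL /= dot_nseq count_and_gates_firing //.
case: ifP => _; first by rewrite muln0.
have euler : (p ^ f.-1) ^ totient q = 1 %[mod q].
  exact: cyclic.Euler_exp_totient (coprimeXl _ co_pq).
rewrite -mulnA -expnD -{2}(mul1n f.-1) -mulnDl addn1 prednK ?totient_gt0 //.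
rewrite [totient q * _]mulnC expnM -modnDmr -modnMmr euler modnMmr muln1 modnDmr.
by rewrite muln1 addnC subnK // modnn mod0n.
Qed.

Definition spread_gate (f : nat) (c : seq nat) (b : nat) (g : gate) : gate :=
  Gate (nseq (b * f * size c) 0 ++
        flatten (mkseq (fun t => map (muln (nth 0 (wires g) t)) c) f))
       (acc g).

Definition spread_level (f B : nat) (c : seq nat) (gs : seq gate) : seq gate :=
  [seq spread_gate f c b g | b <- iota 0 B, g <- gs].

Definition blockwise_and (q : nat) (c : seq nat) (s B : nat) (X x : seq bool) :=
  forall b, b < B -> dot c (block (size c) b X) = all id (block s b x) %[mod q].

Lemma dot_spread_gate f c b g X :
  dot (wires (spread_gate f c b g)) X =
  \sum_(t < f) nth 0 (wires g) t * dot c (block (size c) (b * f + t) X).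
Proof.
rewrite dot_cat size_nseq dot_nseq0 add0n (dot_flatten_blocks (G := size c)).
  by apply: eq_bigr => t _; rewrite dot_scale block_drop.
by move=> t; rewrite size_map.
Qed.

Lemma eval_spread_gate p f c s B X x b g :
  blockwise_and p c s (f * B) X x -> b < B ->
  eval_gate p (spread_gate f c b g) X =
  eval_gate p g (mkseq (fun t => all id (block s (b * f + t) x)) f).
Proof.
move=> andX ltbB; rewrite !eval_gateE dot_spread_gate dot_mkseq; congr (acc g _).
rewrite -[LHS]modn_summ -[RHS]modn_summ; congr (_ %% p); apply: eq_bigr => t _.
by rewrite -modnMmr andX ?modnMmr //; have := ltn_ord t; nia.
Qed.

Lemma blockwise_and_spread p q f s B c c' gs X x :
  blockwise_and p c s (f * B) X x -> and_gadget p q f gs c' ->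
  blockwise_and q c' (s * f) B (eval_level p (spread_level f B c gs) X) x.
Proof.
move=> andX [size_c' gadget] b ltbB.
rewrite /eval_level /spread_level map_flatten -map_comp size_c' (block_flatten 0).
- rewrite nth_iota // add0n /= -map_comp (eq_map (fun g => eval_spread_gate g andX ltbB)).
  by rewrite gadget ?size_mkseq // block_mul all_flatten /mkseq !all_map.
- by move=> u; rewrite /= !size_map.
- by rewrite size_iota.
Qed.

Fixpoint and_levels (k : nat) (ps : seq nat) (c : seq nat) : seq (seq gate) :=
  if ps is p :: ps' then
    if ps' is q :: rest then
      spread_level k (k ^ size rest) c (and_gates p k) ::
      and_levels k ps' (and_coefs p q k)
    else [:: [:: Gate c (fun r => r == 1)]]
  else [::].

Lemma eval_and_levels k ps c s X x :
  all (leq 2) ps -> sorted coprime ps -> ps != [::] ->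
  blockwise_and (head 0 ps) c s (k ^ (size ps).-1) X x ->
  eval_levels ps (and_levels k ps c) X = [:: all id (block (s * k ^ (size ps).-1) 0 x)].
Proof.
elim: ps c s X => [|p [|q rest] IHps] c s X //.
  rewrite /= andbT => p_gt1 _ _ andX; rewrite sum_dotE expn0 muln1.
  have := andX 0 isT; rewrite /block mul0n drop0 dot_take => ->.
  by case: (all id _); rewrite modn_small //; apply: ltnW.
case/and3P=> p_gt1 q_gt1 rest_gt1 /andP[co_pq sorted_ps] _ andX.
rewrite [LHS](IHps _ (s * k)) //= ?q_gt1 // ?expnS ?mulnA //.
apply: blockwise_and_spread; first by rewrite -expnS.
by apply: and_gadget_and_gates; rewrite // ltnW.
Qed.

Lemma size_and_levels k ps c : size (and_levels k ps c) = size ps.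
Proof. by elim: ps c => [|p [|q rest] IHps] c //=; rewrite IHps. Qed.

Lemma size_last_and_levels k ps c L :
  ps != [::] -> size (last L (and_levels k ps c)) = 1.
Proof. by elim: ps c L => [|p [|q rest] IHps] c L //= _; apply: IHps. Qed.

Lemma circuit_size_and_levels k ps c : 0 < k ->
  circuit_size (and_levels k ps c) <= size ps * (k ^ size ps * (sumn ps ^ k).+1).
Proof.
move=> k_gt0; elim: ps c => [|p [|q rest] IHps] c //.
  by rewrite /circuit_size /= mul1n expn1 addn0 muln_gt0 k_gt0.
have -> : circuit_size (and_levels k [:: p, q & rest] c) =
          k ^ size rest * (p ^ k).+1 +
          circuit_size (and_levels k (q :: rest) (and_coefs p q k)).
  by rewrite /circuit_size /= size_allpairs size_iota size_and_gates.
rewrite [X in _ <= X]mulSn; apply: leq_add.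
  apply: leq_mul; first by rewrite leq_pexp2l // ltnW.
  by rewrite ltnS leq_exp2r // leq_addr.
apply: leq_trans (IHps _) _; rewrite leq_mul2l leq_mul ?orbT // ?leq_pexp2l //.
by rewrite ltnS leq_exp2r // leq_addl.
Qed.

Lemma blockwise_and_bits q x : blockwise_and q [:: 1] 1 (size x) x x.
Proof.
by move=> b ltbx; rewrite /block muln1 (drop_nth false) //= take0 mul1n addn0 andbT.
Qed.

Definition pad_gate (p n m : nat) (g : gate) : gate :=
  Gate (take n (wires g))
       (fun r => acc g ((r + dot (drop n (wires g)) (nseq m true)) %% p)).

Lemma eval_pad_gate p n m g x : size x = n ->
  eval_gate p (pad_gate p n m g) x = eval_gate p g (x ++ nseq m true).
Proof. by move=> sx; rewrite !eval_gateE /= dot_catr sx modnDml. Qed.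

Definition pad_inputs (p n m : nat) (C : seq (seq gate)) : seq (seq gate) :=
  if C is L :: C' then map (pad_gate p n m) L :: C' else C.

Lemma eval_pad_inputs p ps n m C x : size x = n -> 0 < size C ->
  eval_levels (p :: ps) (pad_inputs p n m C) x =
  eval_levels (p :: ps) C (x ++ nseq m true).
Proof.
case: C => [|L C] //= sx _; congr (eval_levels ps C _).
by rewrite /eval_level -map_comp; apply: eq_map => g; apply: eval_pad_gate.
Qed.

Lemma shape_pad_inputs p n m C : map size (pad_inputs p n m C) = map size C.
Proof. by case: C => //= L C; rewrite size_map. Qed.

Lemma is_CC_circuit_pad_inputs p n m ms C :
  is_CC_circuit ms C -> is_CC_circuit ms (pad_inputs p n m C).
Proof.
rewrite /is_CC_circuit -(size_map size C) -(size_map size (pad_inputs _ _ _ _)).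
by rewrite -!(last_map size) /= shape_pad_inputs.
Qed.

Lemma circuit_size_pad_inputs p n m C :
  circuit_size (pad_inputs p n m C) = circuit_size C.
Proof. by rewrite /circuit_size shape_pad_inputs. Qed.

Lemma and_circuit_exists p ps k n :
  all (leq 2) (p :: ps) -> sorted coprime (p :: ps) -> 0 < k -> n <= k ^ size ps ->
  exists C, is_CC_circuit (p :: ps) C /\ computes_AND n (p :: ps) C /\
    circuit_size C <= (size ps).+1 * (k ^ (size ps).+1 * (sumn (p :: ps) ^ k).+1).
Proof.
move=> ps_gt1 sorted_ps k_gt0 le_n_N; set N := k ^ size ps.
exists (pad_inputs p n (N - n) (and_levels k (p :: ps) [:: 1])); split; [|split].
- apply: is_CC_circuit_pad_inputs; split; first exact: size_and_levels.
  exact: size_last_and_levels.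
- move=> x sx; set X := x ++ nseq (N - n) true.
  have sX : size X = N by rewrite size_cat size_nseq sx subnKC.
  have andX : blockwise_and p [:: 1] 1 N X X by rewrite -sX; apply: blockwise_and_bits.
  rewrite /circuit_output eval_pad_inputs ?size_and_levels // -/X.
  rewrite (eval_and_levels ps_gt1 sorted_ps _ andX) //= mul1n.
  by rewrite /block mul0n drop0 -/N -sX take_size all_cat all_nseq orbT andbT.
- by rewrite circuit_size_pad_inputs; apply: circuit_size_and_levels.
Qed.

Lemma leq_size_bound_exp2 h k S : 0 < h -> 0 < k -> 0 < S ->
  h * (k ^ h * (S ^ k).+1) <= 2 ^ ((2 * h + 1 + S) * k).
Proof.
move=> h_gt0 k_gt0 S_gt0.
have le_h : h <= 2 ^ (h * k).
  by apply: leq_trans (ltnW (ltn_expl h (ltnSn 1))) _; rewrite leq_pexp2l // leq_pmulr.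
have le_kh : k ^ h <= 2 ^ (k * h) by rewrite expnM leq_exp2r // ltnW // ltn_expl.
have le_Sk : (S ^ k).+1 <= 2 ^ (k + S * k).
  rewrite expnD -addn1; apply: (@leq_trans (2 * S ^ k)).
    by rewrite mul2n -addnn leq_add2l expn_gt0 S_gt0.
  apply: leq_mul; first by rewrite -{1}(expn1 2) leq_pexp2l.
  by rewrite expnM leq_exp2r // ltnW // ltn_expl.
apply: leq_trans (leq_mul le_h (leq_mul le_kh le_Sk)) _.
by rewrite -!expnD leq_pexp2l //; lia.
Qed.

Lemma INR_expn a b : INR (a ^ b) = pow (INR a) b.
Proof. by elim: b => [|b IHb] //; rewrite expnS mulnE mult_INR IHb. Qed.

Lemma INR_le_Rpower2 m e y : m <= 2 ^ e -> Rle (INR e) y -> Rle (INR m) (Rpower 2 y).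
Proof.
move=> /leP/le_INR le_m_2e le_e_y; apply: Rle_trans le_m_2e _.
rewrite INR_expn -Rpower_pow; last by apply/lt_0_INR/ltP.
by apply: Rle_Rpower => //=; lra.
Qed.

Lemma exists_root_ceiling d n : 0 < d -> 0 < n ->
  exists k, [/\ 0 < k, n <= k ^ d &
              Rle (INR k) (Rmult 2 (Rpower (INR n) (Rdiv 1 (INR d))))].
Proof.
move=> d_gt0 n_gt0.
have [|k le_n_kd min_k] := ex_minnP (P := fun k => n <= k ^ d).
  by exists n; rewrite -{1}(expn1 n) leq_pexp2l.
have k_gt0 : 0 < k by case: k le_n_kd {min_k} => //; rewrite exp0n // leqNgt n_gt0.
exists k; split => //; set t := Rpower (INR n) (Rdiv 1 (INR d)).
have d_pos : Rlt 0 (INR d) by apply/lt_0_INR/ltP.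
have n_ge1 : Rle 1 (INR n) by apply/(le_INR 1)/leP.
have t_ge1 : Rle 1 t.
  rewrite -(Rpower_O (INR n)); last lra.
  by apply: Rle_Rpower => //; apply/Rlt_le/Rdiv_lt_0_compat; lra.
have t_pow : pow t d = INR n.
  rewrite -Rpower_pow; last lra.
  rewrite /t Rpower_mult (_ : Rmult (Rdiv 1 (INR d)) (INR d) = R1); last by field; lra.
  by apply: Rpower_1; lra.
have lt_k1_t : Rlt (INR k.-1) t.
  apply: Rnot_le_lt => le_t_k1.
  have /min_k : n <= k.-1 ^ d.
    apply/leP/INR_le; rewrite INR_expn -t_pow; apply: pow_incr; lra.
  by rewrite -ltnS prednK // ltnn.
by rewrite -(prednK k_gt0) S_INR; lra.
Qed.

Theorem proposition4p2 (h : nat) (p : seq nat) :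
  (2 <= h)%N -> size p = h ->
  (forall i, (i < h)%N -> prime (nth 0%N p i)) ->
  (forall i, (i.+1 < h)%N -> nth 0%N p i <> nth 0%N p i.+1) ->
  exists (c : R) (N : nat), Rlt 0 c /\
    forall n : nat, (N <= n)%N -> (1 <= n)%N ->
      exists C : seq (seq gate),
        is_CC_circuit p C /\ computes_AND n p C /\
        Rle (INR (circuit_size C))
            (Rpower 2 (Rmult c (Rpower (INR n) (Rdiv 1 (INR (h - 1)))))).
Proof.
move=> h_ge2 size_p prime_p distinct_p.
have p_gt1 : all (leq 2) p.
  by apply/(all_nthP 0) => i; rewrite size_p => /prime_p/prime_gt1.
have coprime_p : sorted coprime p.
  apply/(sortedP 0) => i; rewrite size_p => lt_i1_h.
  rewrite prime_coprime ?dvdn_prime2 ?prime_p ?(ltnW lt_i1_h) //.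
  exact/eqP/distinct_p.
clear prime_p distinct_p.
case: p size_p p_gt1 coprime_p => [|p0 ps] size_p p_gt1 coprime_p.
  by rewrite -size_p in h_ge2.
pose E := 2 * h + 1 + sumn (p0 :: ps).
exists (INR (2 * E)), 1; split; first by apply/lt_0_INR/ltP; lia.
move=> n _ n_gt0.
have [k [k_gt0 le_n_k le_k_root]] := @exists_root_ceiling (h - 1) n ltac:(lia) n_gt0.
have [|C [CC [AND size_C]]] := and_circuit_exists p_gt1 coprime_p k_gt0 (n := n).
  by rewrite -size_p subn1 in le_n_k.
have size_C_exp : circuit_size C <= 2 ^ (E * k).
  apply: leq_trans size_C _; rewrite [(size ps).+1]size_p.
  by apply: leq_size_bound_exp2 => //=; [lia | case/andP: p_gt1; lia].
exists C; do 2!split => //; apply: INR_le_Rpower2 size_C_exp _.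
have := pos_INR E; rewrite !mult_INR /=; nra.
Qed.
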